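(* In the two-firm setting below, fix $t<T$ and current asset values $a_1=a_{1,t}>0$, $a_2=a_{2,t}>0$. Assume: - the asset correlation satisfies $\rho\in(-1,1)$; - the current equity prices satisfy $s_1,s_2>0$; - the equity Deltas satisfy $\Delta_{11},\Delta_{22}>0$ and $\Delta_{12},\Delta_{21}\ge 0$. Then the instantaneous equity correlation satisfies $\rho^s\ge\rho$.
   Context: Two-firm network model ($n=2$). Cross-holdings. $M^s_{12},M^s_{21},M^d_{12},M^d_{21}\in[0,1)$ are equity/debt cross-holding fractions: firm $i$ holds fraction $M^s_{ij}$ of firm $j$'s equity and fraction $M^d_{ij}$ of firm $j$'s debt. Diagonal entries are zero. Nominal debts are $d_1,d_2>0$. Payoffs at maturity. For terminal external asset values $\mathbf{a}_T\in(0,\infty)^2$, the terminal equity and debt values $\mathbf{x}^*(\mathbf{a}_T)=(s_1^*,s_2^*,r_1^*,r_2^* )$ are the unique solution of $$s_i=\max\Big\{0,\;a_{i,T}+\sum_j M^s_{ij}s_j+\sum_j M^d_{ij}r_j-d_i\Big\},$$ $$r_i=\min\Big\{d_i,\;a_{i,T}+\sum_j M^s_{ij}s_j+\sum_j M^d_{ij}r_j\Big\}.$$ Asset dynamics. Under the risk-neutral measure $Q$ the external assets follow the correlated geometric Brownian motion $$dA_{i,t}=rA_{i,t}\,dt+\sigma_iA_{i,t}\,dW_{i,t},$$ with interest rate $r$, volatilities $\sigma_1,\sigma_2>0$, and $d\langle W_1,W_2\rangle_t=\rho\,dt$. Prices and Deltas. With $\tau=T-t$, the time-$t$ equity prices are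 $$s_i=s_{i,t}=\mathbb{E}^Q_t\big[e^{-r\tau}s_i^*(\mathbf{A}_T)\big]$$ as functions of the current asset values $a_1,a_2$. The equity Deltas are $\Delta_{ij}=\partial s_{i,t}/\partial a_{j,t}$; write $\boldsymbol{\Delta}=(\Delta_{ij})$. Equity correlation. Let $\boldsymbol{\Sigma}=\begin{pmatrix}\sigma_1^2&\rho\sigma_1\sigma_2\\ \rho\sigma_1\sigma_2&\sigma_2^2\end{pmatrix}$ be the asset covariance matrix. The instantaneous equity covariance matrix is $$\boldsymbol{\Sigma}^s=\operatorname{diag}(s_1,s_2)^{-1}\,\boldsymbol{\Delta}\,\operatorname{diag}(a_1,a_2)\,\boldsymbol{\Sigma}\,\operatorname{diag}(a_1,a_2)\,\boldsymbol{\Delta}^T\operatorname{diag}(s_1,s_2)^{-1},$$ and the equity correlation is $\rho^s=\Sigma^s_{12}/\sqrt{\Sigma^s_{11}\Sigma^s_{22}}$. *)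

From HB Require Import structures.
From mathcomp Require Import all_boot all_order all_algebra.
From mathcomp Require Import all_classical all_reals all_analysis.
Set Implicit Arguments. Unset Strict Implicit. Unset Printing Implicit Defensive.
Import Order.TTheory GRing.Theory Num.Theory.
Import numFieldNormedType.Exports.
Local Open Scope classical_set_scope.
Local Open Scope ring_scope.

Section TwoFirm.
Variable R : realType.

(* Terminal equilibrium equations: x = (s, r) with s, r column vectors in R^2.
   Ms, Md : cross-holding matrices, d : nominal debts, aT : terminal external assets. *)
Definition is_terminal (Ms Md : 'M[R]_2) (d aT : 'cV[R]_2)
    (x : 'cV[R]_2 * 'cV[R]_2) : Prop :=
  forall i : 'I_2,
    x.1 i 0 = Num.max 0 (aT i 0 + (Ms *m x.1) i 0 + (Md *m x.2) i 0 - d i 0) /\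
    x.2 i 0 = Num.min (d i 0) (aT i 0 + (Ms *m x.1) i 0 + (Md *m x.2) i 0).

Definition xstar (Ms Md : 'M[R]_2) (d aT : 'cV[R]_2) : 'cV[R]_2 * 'cV[R]_2 :=
  xget (0, 0) [set x | is_terminal Ms Md d aT x].

Definition sstar (Ms Md : 'M[R]_2) (d aT : 'cV[R]_2) (i : 'I_2) : R :=
  (xstar Ms Md d aT).1 i 0.

(* Terminal asset values under Q, as functions of current values a, time to
   maturity tau and two independent standard normal variables z1, z2:
   W_{1,T}-W_{1,t} = sqrt tau * z1,
   W_{2,T}-W_{2,t} = sqrt tau * (rho z1 + sqrt(1-rho^2) z2). *)
Definition terminal_assets (r sig1 sig2 rho tau : R) (a : 'cV[R]_2) (z1 z2 : R)
  : 'cV[R]_2 :=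
  \col_(i < 2)
    (a i 0 * expR ((r - (if i == 0 :> nat then sig1 else sig2) ^+ 2 / 2) * tau
       + (if i == 0 :> nat then sig1 else sig2) * Num.sqrt tau *
         (if i == 0 :> nat then z1 else rho * z1 + Num.sqrt (1 - rho ^+ 2) * z2))).

Definition phi (z : R) : R := normal_pdf 0 1 z.

(* Time-t equity price s_{i,t} = E^Q_t[e^{-r tau} s_i^*(A_T)] as a function of
   the current asset values (a1, a2). *)
Definition equity_price (Ms Md : 'M[R]_2) (d : 'cV[R]_2)
    (r sig1 sig2 rho t T : R) (i : 'I_2) (a1 a2 : R) : R :=
  let tau := T - t in
  let a := \col_(k < 2) (if k == 0 :> nat then a1 else a2) in
  expR (- r * tau) *
  \int[lebesgue_measure]_(z1 in [set: R])
     (\int[lebesgue_measure]_(z2 in [set: R])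
        (sstar Ms Md d (terminal_assets r sig1 sig2 rho tau a z1 z2) i
           * phi z1 * phi z2)).

Definition delta (Ms Md : 'M[R]_2) (d : 'cV[R]_2)
    (r sig1 sig2 rho t T : R) (a1 a2 : R) : 'M[R]_2 :=
  \matrix_(i < 2, j < 2)
    (if j == 0 :> nat
     then derive1 (fun b => equity_price Ms Md d r sig1 sig2 rho t T i b a2) a1
     else derive1 (fun b => equity_price Ms Md d r sig1 sig2 rho t T i a1 b) a2).

Definition asset_cov (sig1 sig2 rho : R) : 'M[R]_2 :=
  \matrix_(i < 2, j < 2)
    (if (i == 0 :> nat) && (j == 0 :> nat) then sig1 ^+ 2
     else if (i == 1 :> nat) && (j == 1 :> nat) then sig2 ^+ 2
     else rho * sig1 * sig2).

Definition diag2 (x1 x2 : R) : 'M[R]_2 :=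
  diag_mx (\row_(k < 2) (if k == 0 :> nat then x1 else x2)).

Definition equity_cov (Ms Md : 'M[R]_2) (d : 'cV[R]_2)
    (r sig1 sig2 rho t T : R) (a1 a2 : R) : 'M[R]_2 :=
  let s1 := equity_price Ms Md d r sig1 sig2 rho t T 0 a1 a2 in
  let s2 := equity_price Ms Md d r sig1 sig2 rho t T 1 a1 a2 in
  let D := delta Ms Md d r sig1 sig2 rho t T a1 a2 in
  invmx (diag2 s1 s2) *m D *m diag2 a1 a2 *m asset_cov sig1 sig2 rho
    *m diag2 a1 a2 *m D^T *m invmx (diag2 s1 s2).

Definition equity_corr (Ms Md : 'M[R]_2) (d : 'cV[R]_2)
    (r sig1 sig2 rho t T : R) (a1 a2 : R) : R :=
  let S := equity_cov Ms Md d r sig1 sig2 rho t T a1 a2 in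
  S 0 1 / Num.sqrt (S 0 0 * S 1 1).

End TwoFirm.

(* With x_i := Delta_i1 a_1 sigma_1 / s_i and y_i := Delta_i2 a_2 sigma_2 / s_i,
   the entries of Sigma^s are B(u_i, u_j) for the bilinear form B of the matrix
   [[1, rho], [rho, 1]] and u_i = (x_i, y_i).  Lagrange's identity
   B(u,u) B(v,v) = B(u,v)^2 + (1 - rho^2) w^2, with w = x_1 y_2 - y_1 x_2, reduces
   rho^s >= rho to rho * |w| <= B(u,v), which holds for vectors in the positive
   quadrant: there B(u,v) - rho |w| = x_1 x_2 + y_1 y_2 + 2 rho min(x_1 y_2, y_1 x_2),
   and the minimum is at most the geometric mean of x_1 x_2 and y_1 y_2. *)
From HB Require Import structures.
From mathcomp Require Import all_boot all_order all_algebra.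
From mathcomp Require Import all_classical all_reals all_analysis.
From mathcomp Require Import ring lra.
Set Implicit Arguments. Unset Strict Implicit. Unset Printing Implicit Defensive.
Import Order.TTheory GRing.Theory Num.Theory.
Local Open Scope ring_scope.

Section CorrelationForm.
Variable R : realType.
Implicit Types rho p q c x y : R.

Definition corr_form rho (x1 y1 x2 y2 : R) : R :=
  x1 * x2 + rho * (x1 * y2 + y1 * x2) + y1 * y2.

Lemma corr_form_lagrange rho (x1 y1 x2 y2 : R) :
  corr_form rho x1 y1 x1 y1 * corr_form rho x2 y2 x2 y2 =
  corr_form rho x1 y1 x2 y2 ^+ 2 + (1 - rho ^+ 2) * (x1 * y2 - y1 * x2) ^+ 2.
Proof. by rewrite /corr_form; ring. Qed.

Lemma corr_form_self_gt0 rho x y :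
  -1 < rho < 1 -> 0 <= x -> 0 <= y -> 0 < x + y -> 0 < corr_form rho x y x y.
Proof.
move=> /andP[rho_gtN1 rho_lt1] x_ge0 y_ge0 xy_gt0.
have -> : corr_form rho x y x y =
    ((1 + rho) * (x + y) ^+ 2 + (1 - rho) * (x - y) ^+ 2) / 2.
  by rewrite /corr_form; field.
apply: divr_gt0 => //; apply: ltr_pwDl; last by rewrite mulr_ge0 ?sqr_ge0 //; lra.
by rewrite mulr_gt0 ?exprn_gt0 //; lra.
Qed.

Lemma AMGM_le p q c : 0 <= p -> 0 <= q -> 0 <= c -> c ^+ 2 <= p * q -> 2 * c <= p + q.
Proof.
move=> p_ge0 q_ge0 c_ge0 c2_le; rewrite -ler_sqr ?nnegrE; try lra.
by have := sqr_ge0 (p - q); nra.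
Qed.

Lemma corr_form_ge_det rho (x1 y1 x2 y2 : R) :
  -1 <= rho -> 0 <= x1 -> 0 <= y1 -> 0 <= x2 -> 0 <= y2 ->
  rho * `|x1 * y2 - y1 * x2| <= corr_form rho x1 y1 x2 y2.
Proof.
move=> rho_geN1 x1_ge0 y1_ge0 x2_ge0 y2_ge0.
set a := x1 * y2; set b := y1 * x2; set m := Num.min a b.
have a_ge0 : 0 <= a by rewrite mulr_ge0.
have b_ge0 : 0 <= b by rewrite mulr_ge0.
have absE : `|a - b| = a + b - 2 * m.
  by rewrite /m; case: (leP a b) => ab; [rewrite ler0_norm ?subr_le0 //|
    rewrite gtr0_norm ?subr_gt0 //]; lra.
have m_ge0 : 0 <= m by rewrite le_min a_ge0 b_ge0.
have two_m_le : 2 * m <= x1 * x2 + y1 * y2.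
  apply: AMGM_le; rewrite ?mulr_ge0 // expr2.
  have -> : x1 * x2 * (y1 * y2) = a * b by rewrite /a /b; ring.
  by apply: ler_pM; rewrite ?ge_min ?lexx ?orbT.
rewrite absE /corr_form -/a -/b.
by have := mulr_ge0 (_ : 0 <= rho + 1) m_ge0; nra.
Qed.

Lemma mul_sqrt_le rho p c :
  -1 <= rho <= 1 -> 0 <= c -> rho * c <= p ->
  rho * Num.sqrt (p ^+ 2 + (1 - rho ^+ 2) * c ^+ 2) <= p.
Proof.
move=> /andP[rho_geN1 rho_le1] c_ge0 rc_le.
set N := Num.sqrt _.
have N_ge0 : 0 <= N := sqrtr_ge0 _.
have k_ge0 : 0 <= 1 - rho ^+ 2 by nra.
have N2 : N ^+ 2 = p ^+ 2 + (1 - rho ^+ 2) * c ^+ 2.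
  by rewrite sqr_sqrtr // addr_ge0 ?sqr_ge0 ?mulr_ge0 ?sqr_ge0.
have gap : (rho * N) ^+ 2 - p ^+ 2 = (1 - rho ^+ 2) * ((rho * c) ^+ 2 - p ^+ 2).
  by rewrite exprMn N2; ring.
have [rho_ge0 | rho_lt0] := lerP 0 rho.
  have rc_ge0 : 0 <= rho * c by rewrite mulr_ge0.
  have : (rho * N) ^+ 2 <= p ^+ 2.
    by rewrite -subr_le0 gap mulr_ge0_le0 // subr_le0 ler_sqr ?nnegrE //; lra.
  nra.
have rN_le0 : rho * N <= 0 by rewrite mulr_le0_ge0 // ltW.
have [p_ge0 | p_lt0] := lerP 0 p; first lra.
have : p ^+ 2 <= (rho * N) ^+ 2.
  rewrite -subr_ge0 gap mulr_ge0 // subr_ge0 -sqrrN -[(rho * c) ^+ 2]sqrrN.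
  by rewrite ler_sqr ?nnegrE; lra.
nra.
Qed.

Lemma corr_form_corr_ge rho (x1 y1 x2 y2 : R) :
  -1 < rho < 1 -> 0 <= x1 -> 0 <= y1 -> 0 <= x2 -> 0 <= y2 ->
  0 < x1 + y1 -> 0 < x2 + y2 ->
  rho <= corr_form rho x1 y1 x2 y2 /
           Num.sqrt (corr_form rho x1 y1 x1 y1 * corr_form rho x2 y2 x2 y2).
Proof.
move=> rho_bnd x1_ge0 y1_ge0 x2_ge0 y2_ge0 u_nz v_nz.
have norm_gt0 := mulr_gt0 (corr_form_self_gt0 rho_bnd x1_ge0 y1_ge0 u_nz)
  (corr_form_self_gt0 rho_bnd x2_ge0 y2_ge0 v_nz).
rewrite ler_pdivlMr ?sqrtr_gt0 // corr_form_lagrange.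
have [rho_gtN1 rho_lt1] := andP rho_bnd.
have := @mul_sqrt_le rho (corr_form rho x1 y1 x2 y2) `|x1 * y2 - y1 * x2|.
rewrite real_normK ?num_real //; apply; [lra | exact: normr_ge0 |].
exact: corr_form_ge_det (ltW rho_gtN1) _ _ _ _.
Qed.

End CorrelationForm.

Lemma mulmx2E (R : pzSemiRingType) (A B : 'M[R]_2) i j :
  (A *m B) i j = A i 0 * B 0 j + A i 1 * B 1 j.
Proof.
by rewrite mxE !big_ord_recl big_ord0 addr0; congr (_ * _ + A i _ * B _ j); apply/val_inj.
Qed.

Section EquityCovariance.
Variable R : realType.

Lemma diag2E (x y : R) :
  [/\ diag2 x y 0 0 = x, diag2 x y 0 1 = 0, diag2 x y 1 0 = 0 & diag2 x y 1 1 = y].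
Proof. by rewrite /diag2 !mxE. Qed.

Lemma asset_covE (sig1 sig2 rho : R) :
  [/\ asset_cov sig1 sig2 rho 0 0 = sig1 ^+ 2,
      asset_cov sig1 sig2 rho 0 1 = rho * sig1 * sig2,
      asset_cov sig1 sig2 rho 1 0 = rho * sig1 * sig2 &
      asset_cov sig1 sig2 rho 1 1 = sig2 ^+ 2].
Proof. by rewrite /asset_cov !mxE. Qed.

Lemma invmx_diag2 (s1 s2 : R) : s1 != 0 -> s2 != 0 ->
  invmx (diag2 s1 s2) = diag2 s1^-1 s2^-1.
Proof.
move=> s1_neq0 s2_neq0.
have diag2V : diag2 s1 s2 *m diag2 s1^-1 s2^-1 = 1%:M.
  rewrite mulmx_diag -diag_const_mx; congr diag_mx; apply/rowP => k.
  by rewrite !mxE; case: ifP => _; rewrite mulfV.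
have [/mulKmx diag2K _] := mulmx1_unit diag2V.
by rewrite -[RHS]diag2K diag2V mulmx1.
Qed.

Lemma diag_sandwichE (s1 s2 a1 a2 sig1 sig2 rho : R) (D : 'M[R]_2) :
  s1 != 0 -> s2 != 0 ->
  let S := invmx (diag2 s1 s2) *m D *m diag2 a1 a2 *m asset_cov sig1 sig2 rho
    *m diag2 a1 a2 *m D^T *m invmx (diag2 s1 s2) in
  let x1 := D 0 0 * a1 * sig1 / s1 in let y1 := D 0 1 * a2 * sig2 / s1 in
  let x2 := D 1 0 * a1 * sig1 / s2 in let y2 := D 1 1 * a2 * sig2 / s2 in
  [/\ S 0 1 = corr_form rho x1 y1 x2 y2,
      S 0 0 = corr_form rho x1 y1 x1 y1 &
      S 1 1 = corr_form rho x2 y2 x2 y2].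
Proof.
move=> s1_neq0 s2_neq0 S x1 y1 x2 y2.
have [d00 d01 d10 d11] := diag2E s1^-1 s2^-1.
have [e00 e01 e10 e11] := diag2E a1 a2.
have [c00 c01 c10 c11] := asset_covE sig1 sig2 rho.
rewrite /S invmx_diag2 // /corr_form /x1 /y1 /x2 /y2 !mulmx2E ![D^T _ _]mxE.
rewrite d00 d01 d10 d11 e00 e01 e10 e11 c00 c01 c10 c11.
by split; field; rewrite ?s1_neq0 ?s2_neq0.
Qed.

End EquityCovariance.

Theorem theorem1 (R : realType) (Ms Md : 'M[R]_2) (d : 'cV[R]_2)
    (r sig1 sig2 rho t T a1 a2 : R) :
  (forall i j : 'I_2, 0 <= Ms i j < 1) ->
  (forall i j : 'I_2, 0 <= Md i j < 1) ->
  (forall i : 'I_2, Ms i i = 0) ->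
  (forall i : 'I_2, Md i i = 0) ->
  (forall i : 'I_2, 0 < d i 0) ->
  0 < sig1 -> 0 < sig2 ->
  t < T -> 0 < a1 -> 0 < a2 ->
  -1 < rho < 1 ->
  0 < equity_price Ms Md d r sig1 sig2 rho t T 0 a1 a2 ->
  0 < equity_price Ms Md d r sig1 sig2 rho t T 1 a1 a2 ->
  let D := delta Ms Md d r sig1 sig2 rho t T a1 a2 in
  0 < D 0 0 -> 0 < D 1 1 -> 0 <= D 0 1 -> 0 <= D 1 0 ->
  rho <= equity_corr Ms Md d r sig1 sig2 rho t T a1 a2.
Proof.
move=> _ _ _ _ _ sig1_gt0 sig2_gt0 _ a1_gt0 a2_gt0 rho_bnd s1_gt0 s2_gt0 D.
move=> D00_gt0 D11_gt0 D01_ge0 D10_ge0; rewrite /equity_corr /equity_cov /=.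
have [-> -> ->] := diag_sandwichE a1 a2 sig1 sig2 rho D (lt0r_neq0 s1_gt0) (lt0r_neq0 s2_gt0).
have x1_gt0 := divr_gt0 (mulr_gt0 (mulr_gt0 D00_gt0 a1_gt0) sig1_gt0) s1_gt0.
have y2_gt0 := divr_gt0 (mulr_gt0 (mulr_gt0 D11_gt0 a2_gt0) sig2_gt0) s2_gt0.
have y1_ge0 :=
  divr_ge0 (mulr_ge0 (mulr_ge0 D01_ge0 (ltW a2_gt0)) (ltW sig2_gt0)) (ltW s1_gt0).
have x2_ge0 :=
  divr_ge0 (mulr_ge0 (mulr_ge0 D10_ge0 (ltW a1_gt0)) (ltW sig1_gt0)) (ltW s2_gt0).
exact: corr_form_corr_ge rho_bnd (ltW x1_gt0) y1_ge0 x2_ge0 (ltW y2_gt0)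
  (ltr_wpDr y1_ge0 x1_gt0) (ltr_wpDl x2_ge0 y2_gt0).
Qed.
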